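(* Let $\mathcal V$ be a Stone variety of profinite $\Omega$-algebras. Then $\mathcal V\cap\mathsf{Fin}_\Omega$ is the least Stone pseudovariety $\mathcal S$ (with respect to inclusion) such that $\widehat{\mathcal S}=\mathcal V$.
   Context: $\Omega=\biguplus_n\Omega_n$ is a fixed topological signature; a Stone topological $\Omega$-algebra is a compact Hausdorff 0-dimensional space with continuous evaluation maps $\Omega_n\times A^n\to A$. A topological algebra is profinite if it is compact and any two distinct elements are separated by a continuous homomorphism into a finite discrete algebra. $\mathsf{Fin}_\Omega$ is the class of all finite (discrete) topological $\Omega$-algebras. A Stone pseudovariety is a nonempty class of Stone topological algebras closed under images by onto continuous homomorphisms that are Stone topological algebras, closed subalgebras, and finite direct products; a Stone variety is defined likewise with arbitrary direct products. For a class $\mathcal S$, $\widehat{\mathcal S}$ is the class of Stone topological algebras that are residually $\mathcal S$ (any two distinct elements separated by a continuous homomorphism into a member of $\mathcal S$). In the paper this least element is denoted $\mathcal V_{\min}$. *)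

From HB Require Import structures.
From mathcomp Require Import all_boot all_order all_algebra.
From mathcomp Require Import all_classical.
From mathcomp Require Import topology.

Set Implicit Arguments.
Unset Strict Implicit.
Unset Printing Implicit Defensive.

Local Open Scope classical_set_scope.

Lemma fst_cont (X Y : topologicalType) : continuous (fun p : X * Y => p.1).
Proof. move=> p; exact: cvg_fst. Qed.

Lemma snd_cont (X Y : topologicalType) : continuous (fun p : X * Y => p.2).
Proof. move=> p; exact: cvg_snd. Qed.

Lemma pair_cont (Z X Y : topologicalType) (f : Z -> X) (g : Z -> Y) :
  continuous f -> continuous g -> continuous (fun z => (f z, g z)).
Proof. move=> fc gc z; exact: cvg_pair (fc z) (gc z). Qed.

Lemma prod_proj_continuous (I : Type) (K : I -> topologicalType) (i : I) :
  continuous (fun f : prod_topology K => f i).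
Proof.
move=> f.
have H : nbhs (f : prod_topology K) --> f by apply: cvg_id.
move: H; rewrite /prod_topology /product_topology_def.
move/cvg_sup => /(_ i) H.
apply: cvg_trans (cvg_app (fun g : forall i, K i => g i) H) _.
exact: (@initial_continuous (forall i, K i) (K i) (fun g => g i) f).
Qed.

Lemma prod_continuous_into (X : topologicalType) (I : Type)
  (K : I -> topologicalType) (g : X -> prod_topology K) :
  (forall i, continuous (fun x => g x i)) -> continuous g.
Proof.
move=> gc x.
rewrite /prod_topology /product_topology_def.
apply/cvg_sup => i.
exact: (@continuous_comp_initial (forall i, K i) X (K i) (fun h => h i) g (gc i) x).
Qed.

(* A topological signature Omega = disjoint union of the Omega_n, given as a
   family [Om : nat -> topologicalType] (Om n = the space of n-ary symbols). *)

Record topAlg (Om : nat -> topologicalType) := TopAlg {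
  ta_car :> topologicalType;
  ta_op : forall n, Om n -> ('I_n -> ta_car) -> ta_car;
  ta_op_cont : forall n,
    continuous (fun p : Om n * prod_topology (fun _ : 'I_n => ta_car) =>
                  ta_op p.1 p.2)
}.

Arguments ta_op {Om} t {n}.

Definition is_hom (Om : nat -> topologicalType) (A B : topAlg Om)
  (f : A -> B) : Prop :=
  forall n (o : Om n) (x : 'I_n -> A), f (ta_op A o x) = ta_op B o (f \o x).

Definition cont_hom (Om : nat -> topologicalType) (A B : topAlg Om)
  (f : A -> B) : Prop := continuous f /\ is_hom f.

Definition Stone (Om : nat -> topologicalType) (A : topAlg Om) : Prop :=
  [/\ compact [set: (A : topologicalType)], hausdorff_space A
    & zero_dimensional A].

Definition FinDisc (Om : nat -> topologicalType) (A : topAlg Om) : Prop :=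
  finite_set [set: (A : topologicalType)] /\ (forall U : set A, open U).

Definition profinite (Om : nat -> topologicalType) (A : topAlg Om) : Prop :=
  compact [set: (A : topologicalType)] /\
  forall x y : A, x <> y ->
    exists B : topAlg Om, FinDisc B /\
      exists f : A -> B, cont_hom f /\ f x <> f y.

Definition tclass (Om : nat -> topologicalType) := topAlg Om -> Prop.

Section Product.
Variables (Om : nat -> topologicalType) (I : Type) (A : I -> topAlg Om).

Definition prod_car : topologicalType := prod_topology (fun i => ta_car (A i)).

Definition prod_op n (o : Om n) (x : 'I_n -> prod_car) : prod_car :=
  fun i => ta_op (A i) o (fun j => x j i).

Lemma prod_op_cont n :
  continuous (fun p : Om n * prod_topology (fun _ : 'I_n => prod_car) =>
                prod_op p.1 p.2).
Proof.
apply: prod_continuous_into => i /=.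
rewrite /prod_op.
pose h := fun p : Om n * prod_topology (fun _ : 'I_n => prod_car) =>
  (p.1, (fun j => p.2 j i) : prod_topology (fun _ : 'I_n => ta_car (A i))).
have hc : continuous h.
  apply: pair_cont; first exact: fst_cont.
  apply: prod_continuous_into => j.
  move=> p.
  apply: (@continuous_comp _ _ _ (fun p : Om n * prod_topology (fun _ : 'I_n => prod_car) => p.2 j)
             (fun g : prod_car => g i)).
    apply: (@continuous_comp _ _ _ (fun p : Om n * prod_topology (fun _ : 'I_n => prod_car) => p.2)
             (fun g : prod_topology (fun _ : 'I_n => prod_car) => g j)).
      exact: snd_cont.
    exact: prod_proj_continuous.
  exact: prod_proj_continuous.
move=> p.
exact: (@continuous_comp _ _ _ h (fun q => ta_op (A i) q.1 q.2) p (hc p)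
          (@ta_op_cont Om (A i) n (h p))).
Qed.

Definition prodAlg : topAlg Om := @TopAlg Om prod_car prod_op prod_op_cont.

End Product.

Definition residually (Om : nat -> topologicalType) (S : tclass Om)
  (A : topAlg Om) : Prop :=
  forall x y : A, x <> y ->
    exists B : topAlg Om, S B /\ exists f : A -> B, cont_hom f /\ f x <> f y.

Definition hat (Om : nat -> topologicalType) (S : tclass Om) : tclass Om :=
  fun A => Stone A /\ residually S A.

Definition closed_images (Om : nat -> topologicalType) (S : tclass Om) : Prop :=
  forall (A B : topAlg Om) (f : A -> B),
    S A -> Stone B -> cont_hom f -> (forall y : B, exists x, f x = y) -> S B.

(* B is (isomorphic, as a topological algebra, to) a closed subalgebra of A:
   there is a continuous injective homomorphism f : B -> A with closed image
   which is a homeomorphism onto its image (every open set of B is the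
   preimage of an open set of A). *)
Definition closed_subalg_of (Om : nat -> topologicalType) (B A : topAlg Om)
  (f : B -> A) : Prop :=
  [/\ cont_hom f, injective f, closed (range f)
    & forall U : set B, open U -> exists W : set A, open W /\ U = f @^-1` W].

Definition closed_subalgs (Om : nat -> topologicalType) (S : tclass Om) : Prop :=
  forall (A B : topAlg Om) (f : B -> A), S A -> closed_subalg_of f -> S B.

Definition closed_finprods (Om : nat -> topologicalType) (S : tclass Om) : Prop :=
  forall (n : nat) (A : 'I_n -> topAlg Om), (forall i, S (A i)) -> S (prodAlg A).

Definition closed_prods (Om : nat -> topologicalType) (S : tclass Om) : Prop :=
  forall (I : Type) (A : I -> topAlg Om), (forall i, S (A i)) -> S (prodAlg A).

Definition Stone_pseudovariety (Om : nat -> topologicalType) (S : tclass Om) :=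
  [/\ exists A, S A, (forall A, S A -> Stone A), closed_images S,
      closed_subalgs S & closed_finprods S].

Definition Stone_variety (Om : nat -> topologicalType) (S : tclass Om) :=
  [/\ exists A, S A, (forall A, S A -> Stone A), closed_images S,
      closed_subalgs S & closed_prods S].

Definition finite_part (Om : nat -> topologicalType) (V : tclass Om) : tclass Om :=
  fun A => V A /\ FinDisc A.

From HB Require Import structures.
From mathcomp Require Import all_boot all_order all_algebra.
From mathcomp Require Import all_classical.
From mathcomp Require Import topology.
From mathcomp Require Import finmap.

(* A Stone algebra A that is residually S embeds into a product of members
   of S, one factor per pair of points; the embedding is a closed subalgebra
   because a continuous injection of a compact space into a Hausdorff one is
   closed.  Taking S = V ∩ Fin gives hat (V ∩ Fin) ⊆ V, and when A is finite
   finitely many factors suffice, so A ∈ S whenever hat S = V.  Conversely a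
   profinite member of V is separated by maps into finite algebras, whose
   images are continuous quotients of it and hence lie in V ∩ Fin. *)

Set Implicit Arguments.
Unset Strict Implicit.
Unset Printing Implicit Defensive.
Local Open Scope classical_set_scope.

Lemma finite_hausdorff_open (X : topologicalType) :
  finite_set [set: X] -> hausdorff_space X -> forall U : set X, open U.
Proof.
move=> fX hX U; rewrite -(setCK U) openC; apply: compact_closed => //.
exact/finite_compact/(sub_finite_set _ fX).
Qed.

Lemma all_open_hausdorff (X : topologicalType) :
  (forall U : set X, open U) -> hausdorff_space X.
Proof.
move=> dX; rewrite open_hausdorff => x y /eqP xy.
exists ([set x], [set y]); first by split; apply/mem_set.
split=> //; apply/eqP/seteqP; split=> z //= [-> e]; exact: xy.
Qed.

Lemma all_open_zero_dimensional (X : topologicalType) :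
  (forall U : set X, open U) -> zero_dimensional X.
Proof.
move=> dX x y /eqP xy; exists [set x]; split=> //; last by move=> e; apply: xy.
by split=> //; rewrite -openC.
Qed.

Lemma finite_set_dprod (I : finType) (T : I -> choiceType) :
  (forall i, finite_set [set: T i]) -> finite_set [set: forall i, T i].
Proof.
move=> fT.
pose X i := projT1 (cid (proj1 finite_fsetP (fT i))).
have memX i (x : T i) : x \in X i.
  by have : [set` X i] x by rewrite -(projT2 (cid (proj1 finite_fsetP (fT i)))).
pose F (x : forall i, T i) : {dffun forall i, X i} :=
  [ffun i => [` memX i (x i)]%fset].
have F_inj : injective F.
  move=> x y /ffunP Fxy; apply: functional_extensionality_dep => i.
  by have := congr1 val (Fxy i); rewrite !ffunE.
rewrite -[X in finite_set X](@preimage_setT _ _ F).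
by apply: finite_preimage; [move=> x y _ _ /F_inj | exact: finite_finset].
Qed.

Lemma finite_set_ord_enum (T : choiceType) :
  finite_set [set: T] -> exists n (e : 'I_n -> T), forall x, exists i, e i = x.
Proof.
case/finite_fsetP => X XP; exists (size X), (fun i => tnth (in_tuple X) i) => x.
have xX : (index x X < size X)%N.
  by rewrite index_mem; have : [set` X] x by rewrite -XP.
by exists (Ordinal xX); rewrite (tnth_nth x) nth_index // -index_mem.
Qed.

Section TopologicalAlgebras.
Variable Om : nat -> topologicalType.
Implicit Types (A B C : topAlg Om) (S V : tclass Om).

Lemma FinDisc_Stone A : FinDisc A -> Stone A.
Proof.
case=> fA dA; split; first exact: finite_compact.
  exact: all_open_hausdorff.
exact: all_open_zero_dimensional.
Qed.

Lemma finite_Stone_FinDisc A : Stone A -> finite_set [set: A] -> FinDisc A.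
Proof. by case=> _ hA _ fA; split=> //; exact: finite_hausdorff_open. Qed.

Lemma ta_op_continuous_comp B (X : topologicalType) (h : X -> B) n :
  continuous h ->
  continuous (fun p : Om n * prod_topology (fun _ : 'I_n => X) =>
                ta_op B p.1 (h \o p.2)).
Proof.
move=> hc.
pose hn (p : Om n * prod_topology (fun _ : 'I_n => X)) :=
  (p.1, (h \o p.2 : prod_topology (fun _ : 'I_n => ta_car B))).
have hn_cont : continuous hn.
  apply: pair_cont; first exact: fst_cont.
  apply: prod_continuous_into => j p.
  apply: (continuous_comp _ (hc _)).
  apply: (@continuous_comp _ _ _ snd (fun x : prod_topology _ => x j)).
    exact: snd_cont.
  exact: prod_proj_continuous.
move=> p; exact: (continuous_comp (hn_cont p) (@ta_op_cont Om B n (hn p))).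
Qed.

Lemma compact_cont_hom_closed_subalg A B (f : A -> B) :
  compact [set: A] -> hausdorff_space B -> cont_hom f -> injective f ->
  closed_subalg_of f.
Proof.
move=> cA hB [fc fh] fi.
have f_closed (K : set A) : closed K -> closed (f @` K).
  move=> cK; apply: compact_closed => //; apply: continuous_compact.
    exact: continuous_subspaceT.
  exact: (subclosed_compact cK cA).
split=> //; first exact: f_closed.
move=> U oU; exists (~` (f @` (~` U))); split.
  by rewrite openC; apply: f_closed; rewrite closedC.
apply/seteqP; split=> x /=.
  by move=> Ux [y nUy /fi eyx]; apply: nUy; rewrite eyx.
by move=> H; apply: contrapT => nUx; apply: H; exists x.
Qed.

Definition prod_hom (I : Type) A (B : I -> topAlg Om) (f : forall i, A -> B i) :
  A -> prodAlg B := fun x i => f i x.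

Lemma prod_hom_cont_hom (I : Type) A (B : I -> topAlg Om)
    (f : forall i, A -> B i) :
  (forall i, cont_hom (f i)) -> cont_hom (prod_hom f).
Proof.
move=> fch; split; first by apply: prod_continuous_into => i; case: (fch i).
move=> n o x; apply: functional_extensionality_dep => i.
by case: (fch i) => _; apply.
Qed.

Definition trivAlg C : topAlg Om := prodAlg (fun _ : 'I_0 => C).

Lemma trivAlg_cont_hom A C : exists g : A -> trivAlg C, cont_hom g.
Proof.
have z : trivAlg C by case.
exists (fun _ => z); split; first exact: cst_continuous.
by move=> n o x; apply: functional_extensionality_dep; case.
Qed.

Lemma finite_trivAlg C : finite_set [set: trivAlg C].
Proof. by apply: finite_set_dprod; case. Qed.

Section Image.
Variables (A B : topAlg Om) (f : A -> B).
Hypothesis fch : cont_hom f.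

Let T : topologicalType := set_type (range f).

Lemma range_ta_op_mem n (o : Om n) (x : 'I_n -> T) :
  ta_op B o (set_val \o x) \in range f.
Proof.
case: fch => _ fh.
have preim j : exists a, f a = set_val (x j).
  by case: (x j) => b bP; have [a _ fab] := set_mem bP; exists a.
have [g Hg] := boolp.choice preim.
apply/mem_set; exists (ta_op A o g) => //.
by rewrite fh; congr (ta_op B o _); apply: boolp.funext => j /=.
Qed.

Definition range_op n (o : Om n) (x : 'I_n -> T) : T :=
  exist _ (ta_op B o (set_val \o x)) (range_ta_op_mem o x).

Lemma range_op_cont n :
  continuous (fun p : Om n * prod_topology (fun _ : 'I_n => T) =>
                range_op p.1 p.2).
Proof.
apply: continuous_comp_initial; apply: ta_op_continuous_comp.
by move=> x; exact: initial_continuous.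
Qed.

Definition rangeAlg : topAlg Om := @TopAlg Om T range_op range_op_cont.

Definition corestrict (a : A) : rangeAlg :=
  exist _ (f a) (mem_range f a).

Lemma corestrict_cont_hom : cont_hom corestrict.
Proof.
case: fch => fc fh; split; first exact: continuous_comp_initial.
by move=> n o x; apply: val_inj; rewrite /= fh.
Qed.

Lemma corestrict_surj (y : rangeAlg) : exists x, corestrict x = y.
Proof. by case: y => b bP; have [x _ fxb] := set_mem bP; exists x; apply: val_inj. Qed.

Lemma rangeAlg_FinDisc : FinDisc B -> FinDisc rangeAlg.
Proof.
case=> fB dB; split.
  rewrite -[X in finite_set X](@preimage_setT _ _ (@set_val _ (range f))).
  by apply: finite_preimage => // x y _ _; apply: val_inj.
move=> U; have -> : U = set_val @^-1` (set_val @` U).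
  by apply/seteqP; split=> [x Ux|x [y Uy /val_inj <-]]; first exists x.
by apply: open_comp => // x _; exact: initial_continuous.
Qed.

End Image.

(* Pairs [(e i, e j)] of equal points are sent to the one-point algebra
   [trivAlg C]. *)
Lemma residually_closed_subalg_prod S C A (I : eqType) (e : I -> A) :
  (forall B, S B -> Stone B) -> S (trivAlg C) -> Stone A -> residually S A ->
  (forall x, exists i, e i = x) ->
  exists B : I -> I -> topAlg Om, (forall i j, S (B i j)) /\
    exists g : A -> prodAlg (fun i => prodAlg (B i)), closed_subalg_of g.
Proof.
move=> SStone STriv [cA _ _] res e_surj.
have sep (p : I * I) : exists s : {B : topAlg Om & A -> B},
    [/\ S (tag s), cont_hom (tagged s)
      & e p.1 <> e p.2 -> tagged s (e p.1) <> tagged s (e p.2)].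
  have [eq_p|neq_p] := pselect (e p.1 = e p.2).
    have [g gch] := trivAlg_cont_hom A C; by exists (Tagged _ g).
  have [B [SB [g [gch g_sep]]]] := res _ _ neq_p; by exists (Tagged _ g).
have [s sP] := boolp.choice sep.
exists (fun i j => tag (s (i, j))); split=> [i j|]; first by case: (sP (i, j)).
pose g := prod_hom (fun i => prod_hom (fun j => tagged (s (i, j)))).
exists g; apply: compact_cont_hom_closed_subalg => //.
- apply: hausdorff_product => i; apply: hausdorff_product => j.
  by case: (sP (i, j)) => /SStone [].
- apply: prod_hom_cont_hom => i; apply: prod_hom_cont_hom => j.
  by case: (sP (i, j)).
- move=> x y gxy; apply: contrapT => nxy.
  have [i ei] := e_surj x; have [j ej] := e_surj y.
  have [_ _ /=] := sP (i, j); rewrite ei ej => /(_ nxy); apply.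
  exact: (congr1 (fun h => h i j) gxy).
Qed.

Lemma finite_part_pseudovariety V :
  Stone_variety V -> Stone_pseudovariety (finite_part V).
Proof.
move=> [[A0 VA0] VS Vim Vsub Vprod].
have fin_part A : V A -> finite_set [set: A] -> finite_part V A.
  by move=> VA fA; split=> //; apply: finite_Stone_FinDisc => //; exact: VS.
split.
- exists (trivAlg A0); apply: fin_part; last exact: finite_trivAlg.
  exact: Vprod.
- by move=> A [/VS].
- move=> A B f [VA [fA _]] sB fch f_surj; apply: fin_part.
    exact: (Vim A B f).
  have -> : [set: B] = f @` [set: A].
    by apply/seteqP; split=> y // _; have [x fx] := f_surj y; exists x.
  exact: finite_image.
- move=> A B f [VA [fA _]] fsub; apply: fin_part; first exact: (Vsub A B f).
  case: fsub => _ fi _ _.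
  rewrite -[X in finite_set X](@preimage_setT _ _ f).
  by apply: finite_preimage => // x y _ _; apply: fi.
- move=> n A FA; apply: fin_part; first by apply: Vprod => i; case: (FA i).
  by apply: finite_set_dprod => i; case: (FA i) => _ [].
Qed.

Lemma hat_sub_Stone_variety V S A :
  Stone_variety V -> (forall B, S B -> V B) -> hat S A -> V A.
Proof.
move=> [[A0 VA0] VS _ Vsub Vprod] SV [sA res].
have resV : residually V A.
  by move=> x y /res [B [/SV VB fB]]; exists B.
have [B [VB [g g_sub]]] := residually_closed_subalg_prod (e := id) VS
  (Vprod _ (fun _ : 'I_0 => A0) (fun _ => VA0)) sA resV (fun x => ex_intro _ x erefl).
exact: (Vsub _ _ g (Vprod _ _ (fun i => Vprod _ _ (VB i))) g_sub).
Qed.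

Lemma profinite_hat_finite_part V A :
  Stone_variety V -> V A -> profinite A -> hat (finite_part V) A.
Proof.
move=> [_ VS Vim _ _] VA [_ sepA]; split; first exact: VS.
move=> x y /sepA [B [finB [f [fch fxy]]]].
have finR := rangeAlg_FinDisc fch finB.
exists (rangeAlg fch); split.
  split=> //; apply: (Vim _ _ _ VA (FinDisc_Stone finR)).
    exact: corestrict_cont_hom.
  exact: corestrict_surj.
exists (corestrict fch); split; first exact: corestrict_cont_hom.
by move=> e; apply: fxy; exact: (congr1 val e).
Qed.

Lemma finite_hat_pseudovariety S A :
  Stone_pseudovariety S -> hat S A -> finite_set [set: A] -> S A.
Proof.
move=> [[C0 SC0] SS _ Ssub Sprod] [sA res] fA.
have [m [e e_surj]] := finite_set_ord_enum fA.
have [B [SB [g g_sub]]] := residually_closed_subalg_prod SS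
  (Sprod 0 (fun _ => C0) (fun _ => SC0)) sA res e_surj.
exact: (Ssub _ _ g (Sprod _ _ (fun i => Sprod _ _ (SB i))) g_sub).
Qed.

End TopologicalAlgebras.

Theorem theorem5p17 (Om : nat -> topologicalType) (V : topAlg Om -> Prop) :
  Stone_variety V -> (forall A, V A -> profinite A) ->
  [/\ Stone_pseudovariety (finite_part V),
      (forall A, hat (finite_part V) A <-> V A)
    & forall S : topAlg Om -> Prop,
        Stone_pseudovariety S -> (forall A, hat S A <-> V A) ->
        forall A, finite_part V A -> S A].
Proof.
move=> Vvar Vprof; split.
- exact: finite_part_pseudovariety.
- move=> A; split; first by apply: hat_sub_Stone_variety => // B [].
  by move=> VA; apply: profinite_hat_finite_part => //; exact: Vprof.
- move=> S Spv hatSV A [VA [fA _]].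
  by apply: finite_hat_pseudovariety => //; apply/hatSV.
Qed.
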